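(* For every tree $T$, $\mathrm{opt}(T)=\mathsf{vc}(T)$; moreover, the simple protocol in which exactly the vertices of a minimum vertex cover of $T$ broadcast their entire input solves the multiparty equality problem and is optimal.
   Context: Multiparty equality in the local broadcast model: $G$ is a connected graph and $k$ a positive integer; every vertex $v$ receives an input $\lambda(v)\in\{0,1\}^k$. Vertices communicate by broadcasting messages; a message broadcast by a vertex is received by all of its neighbours, and its number of bits is counted once. Protocols are deterministic and static: which vertices send messages and the message lengths depend only on $G$ and $k$, while message contents may depend on inputs. At the end every vertex accepts or rejects; the protocol solves the problem if all vertices accept when all inputs are equal and at least one vertex rejects when two inputs differ. Total cost = sum over vertices of the number of bits broadcast; $\mathrm{opt}(G,k)$ is the minimum total cost of a solving protocol and $\mathrm{opt}(G)=\lim_{k\to\infty}\mathrm{opt}(G,k)/k$. A simple protocol is one in which each vertex of a fixed set $S$ broadcasts its whole input and all other vertices are silent, and each vertex accepts iff every input it received equals its own input; its per-bit cost is $|S|$. $\mathsf{vc}(T)$ is the minimum size of a vertex cover of $T$. *)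

From Stdlib Require Import Reals ClassicalEpsilon.
From mathcomp Require Import all_boot.

Set Implicit Arguments.
Unset Strict Implicit.
Unset Printing Implicit Defensive.

Section Model.
Variable V : finType.
Variable e : rel V.

Definition graph_connected : Prop := forall u v : V, connect e u v.

Definition is_tree : Prop :=
  graph_connected /\
  forall (x : V) (p : seq V),
    path e x p -> uniq (x :: p) -> 2 <= size p -> ~~ e (last x p) x.

Definition is_vertex_cover (S : {set V}) : bool :=
  [forall u, forall v, e u v ==> (u \in S) || (v \in S)].

Definition vc : nat :=
  \big[minn/#|V|]_(S : {set V} | is_vertex_cover S) #|S|.

Definition min_vertex_cover (S : {set V}) : Prop :=
  is_vertex_cover S /\ #|S| = vc.

(* A deterministic static protocol for inputs in {0,1}^k.
   [sched] is the fixed sequence of broadcasts (sender, number of bits);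
   it depends only on the graph and k.  The content of the t-th message is
   computed by [msgf t v] from the sender's input and its view (all messages
   it received so far); the final decision of each vertex is computed by
   [decide] from its input and its final view. *)
Record protocol (k : nat) := Protocol {
  sched : seq (V * nat);
  msgf : nat -> V -> k.-tuple bool -> seq (option bitseq) -> bitseq;
  decide : V -> k.-tuple bool -> seq (option bitseq) -> bool }.

Definition fit (l : nat) (m : bitseq) : bitseq := take l m ++ nseq (l - size m) false.

(* view of vertex w of a transcript: the i-th entry is the i-th message if
   w is a neighbour of its sender (so it received it), None otherwise *)
Definition view (w : V) (tr : seq (V * bitseq)) : seq (option bitseq) :=
  [seq if e u.1 w then Some u.2 else None | u <- tr].

Section Run.
Variables (k : nat) (P : protocol k) (lam : V -> k.-tuple bool).

Fixpoint run (s : seq (V * nat)) (t : nat) (tr : seq (V * bitseq)) :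
    seq (V * bitseq) :=
  match s with
  | [::] => tr
  | (v, l) :: s' =>
      run s' t.+1 (rcons tr (v, fit l (msgf P t v (lam v) (view v tr))))
  end.

Definition transcript : seq (V * bitseq) := run (sched P) 0 [::].

Definition accepts (v : V) : bool := decide P v (lam v) (view v transcript).
End Run.

Definition cost k (P : protocol k) : nat := sumn (map snd (sched P)).

Definition solves k (P : protocol k) : Prop :=
  (forall lam : V -> k.-tuple bool,
      (forall u v, lam u = lam v) -> forall v, accepts P lam v) /\
  (forall lam : V -> k.-tuple bool,
      (exists u v, lam u <> lam v) -> exists v, ~~ accepts P lam v).

Definition is_opt (k c : nat) : Prop :=
  (exists P : protocol k, solves P /\ cost P = c) /\
  (forall P : protocol k, solves P -> c <= cost P).

Definition opt_k (k : nat) : nat := epsilon (inhabits 0) (is_opt k).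

Definition simple_protocol (S : {set V}) (k : nat) : protocol k :=
  Protocol [seq (v, k) | v <- enum S]
    (fun _ _ x _ => val x)
    (fun _ x vw => all (fun o => if o is Some m then m == val x else true) vw).

End Model.

From Stdlib Require Import Reals ClassicalEpsilon Lia.
From mathcomp Require Import all_boot zify.

Set Implicit Arguments.
Unset Strict Implicit.
Unset Printing Implicit Defensive.

(* Lower bound: if uv is the only edge leaving a vertex set A containing u,
   then the bits broadcast by u and v determine the common input.  Indeed, if
   they coincide on the constant inputs x <> y, splice the two runs: on the
   input that is x on A and y elsewhere, every vertex of A sees what it sees on
   input x and every other vertex what it sees on input y, so nobody rejects.
   Hence u and v broadcast at least k bits together.  In a tree every edge is
   such a cut, and removing a leaf together with its neighbour shows that any
   vertex weights giving every edge weight at least k have total at least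
   k * vc(T).  The simple protocol on a minimum vertex cover costs vc(T) * k,
   so opt(T, k) = vc(T) * k for every k. *)

Section VertexCover.
Variables (V : finType) (e : rel V).

Lemma vc_leq_card (S : {set V}) : is_vertex_cover e S -> vc e <= #|S|.
Proof.
move=> coverS; rewrite /vc.
have : S \in index_enum {set V} by rewrite mem_index_enum.
elim: (index_enum _) => [//|X r IH]; rewrite inE big_cons.
case/predU1P=> [<-|/IH]; first by rewrite coverS geq_minl.
by case: ifP => // _; rewrite geq_min => ->; rewrite orbT.
Qed.

Lemma min_vertex_cover_exists : exists S, min_vertex_cover e S.
Proof.
rewrite /min_vertex_cover /vc.
apply: (big_ind (fun n => exists S, is_vertex_cover e S /\ #|S| = n)).
- exists setT; split; last exact: cardsT.
  by apply/forallP=> u; apply/forallP=> v; rewrite in_setT orTb implybT.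
- by move=> m n hm hn; rewrite /minn; case: ifP.
- by move=> S coverS; exists S.
Qed.

End VertexCover.

Section Forest.
Variables (V : finType) (e : rel V).
Hypotheses (e_sym : symmetric e) (e_irr : irreflexive e).
Hypothesis e_acyclic : forall (x : V) (p : seq V),
  path e x p -> uniq (x :: p) -> 2 <= size p -> ~~ e (last x p) x.

Lemma acyclic_no_chord x y q z :
  path e x (y :: q) -> uniq [:: x, y & q] -> z \in q -> ~~ e x z.
Proof.
move=> + + zq; case/splitPr: zq => q1 q2; rewrite -cat_rcons -!cat_cons.
rewrite cat_path cat_uniq => /andP[pxz _] /andP[uxz _].
have := e_acyclic pxz uxz; rewrite /= last_rcons size_rcons e_sym; exact.
Qed.

(* A longest path inside [W] starts at a leaf of the subgraph induced by [W]. *)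
Lemma acyclic_leaf (W : {set V}) a b : a \in W -> b \in W -> e a b ->
  exists l p, [/\ l \in W, p \in W, e l p & forall z, z \in W -> e l z -> z = p].
Proof.
move=> aW bW eab.
suff leaf_from n x y q : #|V| - size q <= n -> all (mem W) [:: x, y & q] ->
    path e x (y :: q) -> uniq [:: x, y & q] ->
    exists l p, [/\ l \in W, p \in W, e l p & forall z, z \in W -> e l z -> z = p].
  apply: (leaf_from _ a b [::] (leqnn _)); rewrite /= ?aW ?bW ?eab ?inE ?andbT //.
  by apply: contraTneq eab => ->; rewrite e_irr.
elim: n x y q => [|n IH] x y q measure xyqW pxyq uxyq;
  have size_xyq : (size q).+2 <= #|V|
    by have := max_card (mem [:: x, y & q]); rewrite (card_uniqP uxyq).
  (* [set] merges the syntactically distinct occurrences of [#|V|] for [lia]. *)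
  by move: measure size_xyq; set c := #|V|; lia.
case: (pickP [pred z | [&& z \in W, e x z & z != y]]) => [z /and3P[zW exz zy]|none].
  apply: (IH z x (y :: q)).
  - by move: measure size_xyq => /=; set c := #|V|; lia.
  - exact/andP.
  - by rewrite /= e_sym exz.
  rewrite cons_uniq uxyq andbT !inE !negb_or zy /=; apply/andP; split.
    by apply: contraTneq exz => ->; rewrite e_irr.
  by apply: contraTN exz => /(acyclic_no_chord pxyq uxyq).
case/and3P: xyqW => xW yW _; exists x, y; split => //; first by case/andP: pxyq.
by move=> z zW exz; apply/eqP; move: (none z) => /=; rewrite zW exz => /negbT /negbNE.
Qed.

Lemma acyclic_weighted_cover k (c : V -> nat) (W : {set V}) :
  (forall a b, e a b -> k <= c a + c b) ->
  exists2 S : {set V},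
    forall a b, a \in W -> b \in W -> e a b -> (a \in S) || (b \in S) &
    k * #|S| <= \sum_(w in W) c w.
Proof.
move=> edge_weight; elim: {W}_.+1 {-2}W (ltnSn #|W|) => // n IH W cardW.
case: (pickP [pred ab : V * V | [&& ab.1 \in W, ab.2 \in W & e ab.1 ab.2]]) =>
    [[a b] /and3P[aW bW eab] | no_edge]; last first.
  exists set0; last by rewrite cards0 muln0.
  by move=> x y xW yW exy; move: (no_edge (x, y)); rewrite /= xW yW exy.
have [l [p [lW pW elp leaf]]] := acyclic_leaf aW bW eab.
have lp : l != p by apply: contraTneq elp => ->; rewrite e_irr.
have [|S' coverS' weightS'] := IH (W :\ p :\ l).
  move: cardW; rewrite (cardsD1 p W) pW (cardsD1 l (W :\ p)) !inE lp lW /=.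
  by set m := #|_|; lia.
exists (p |: S').
  move=> x y xW yW exy; rewrite !inE.
  have [xl|xl] := eqVneq x l; first by subst x; rewrite (leaf y yW exy) eqxx orbT.
  have [yl|yl] := eqVneq y l; first by subst y; rewrite (leaf x xW) ?eqxx // e_sym.
  have [//|xp] := eqVneq x p; have [|yp] := eqVneq y p; first by rewrite orbT.
  by apply: coverS'; rewrite ?inE ?xl ?xp ?yl ?yp.
have -> : \sum_(w in W) c w = c l + c p + \sum_(w in W :\ p :\ l) c w.
  by rewrite (big_setD1 p pW) (big_setD1 l) ?inE ?lp ?lW //= addnCA addnA.
rewrite cardsU1 mulnDr leq_add // (leq_trans _ (edge_weight l p elp)) //.
by rewrite -{2}[k]muln1 leq_mul2l leq_b1 orbT.
Qed.

Lemma acyclic_vc_weight k (c : V -> nat) :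
  (forall a b, e a b -> k <= c a + c b) -> k * vc e <= \sum_w c w.
Proof.
move=> /(acyclic_weighted_cover [set: V])[S coverS weightS].
have : is_vertex_cover e S.
  by apply/forallP=> a; apply/forallP=> b; apply/implyP; apply: coverS.
move=> /vc_leq_card/(leq_mul (leqnn k))/leq_trans; apply.
by apply: leq_trans weightS _; rewrite (eq_bigl xpredT) // => w; rewrite in_setT.
Qed.

Lemma acyclic_edge_cut u v : e u v -> exists A : {set V},
  [/\ u \in A, v \notin A &
      forall a b, e a b -> a \in A -> b \notin A -> (a == u) && (b == v)].
Proof.
move=> euv.
pose e' : rel V := fun a b => e a b && ~~ [|| (a == u) && (b == v) | (a == v) && (b == u)].
pose A := [set w | connect e' u w].
have vA : v \notin A.
  rewrite inE; apply/negP => /connectP[p pp].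
  case: (shortenP pp) => p' pp' up' _.
  have hp : path e u p' by apply: sub_path pp' => a b /andP[].
  case: p' pp' up' hp => [|b [|c q]] pp' up' hp vq.
  - by rewrite vq e_irr in euv.
  - by move: pp'; rewrite /= in vq; rewrite -vq /= /e' !eqxx andbF.
  - by have := e_acyclic hp up' isT; rewrite -vq e_sym euv.
exists A; split=> //; first by rewrite inE connect0.
move=> a b eab aA bA; case e'ab: (e' a b).
  by move: aA bA; rewrite !inE => aA /negP[]; apply: connect_trans aA (connect1 e'ab).
move: e'ab; rewrite /e' eab => /negbFE /orP[// | /andP[/eqP av _]].
by rewrite -av aA in vA.
Qed.
End Forest.

Lemma size_fit l (m : bitseq) : size (fit l m) = l.
Proof.
rewrite /fit size_cat size_take size_nseq.
by case: ltnP => [/ltnW|/subnKC //]; rewrite -subn_eq0 => /eqP ->; rewrite addn0.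
Qed.

Definition edge_msgs (V : eqType) (u v : V) (tr : seq (V * bitseq)) : seq bitseq :=
  [seq m.2 | m <- tr & (m.1 == u) || (m.1 == v)].

Section Transcript.
Variables (V : finType) (e : rel V) (k : nat) (P : protocol V k).

Lemma run_extends lam s t tr : exists r, run e P lam s t tr = tr ++ r.
Proof.
elim: s t tr => [|[w l] s IH] t tr /=; first by exists [::]; rewrite cats0.
have [r ->] := IH t.+1 (rcons tr (w, fit l (msgf P t w (lam w) (view e w tr)))).
by eexists; rewrite cat_rcons.
Qed.

Lemma run_shape lam s t tr :
  [seq (m.1, size m.2) | m <- run e P lam s t tr] =
  [seq (m.1, size m.2) | m <- tr] ++ s.
Proof.
elim: s t tr => [|[w l] s IH] t tr /=; first by rewrite cats0.
by rewrite IH map_rcons /= size_fit cat_rcons.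
Qed.

Lemma transcript_shape lam :
  [seq (m.1, size m.2) | m <- transcript e P lam] = sched P.
Proof. exact: run_shape. Qed.

Definition sent_bits (w : V) : nat := \sum_(b <- sched P | b.1 == w) b.2.

Lemma cost_sum_sent_bits : cost P = \sum_w sent_bits w.
Proof.
rewrite /cost /sent_bits (exchange_big_dep predT) //= sumnE big_map.
by apply: eq_bigr => b _; rewrite (big_pred1 b.1).
Qed.

End Transcript.

Lemma edge_msgs_prefix (V : eqType) (u v : V) (tr1 tr2 r1 r2 : seq (V * bitseq)) :
  map fst tr1 = map fst tr2 ->
  edge_msgs u v (tr1 ++ r1) = edge_msgs u v (tr2 ++ r2) ->
  edge_msgs u v tr1 = edge_msgs u v tr2.
Proof.
move=> senders; rewrite /edge_msgs !filter_cat !map_cat => /eqP.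
rewrite eqseq_cat => [/andP[/eqP] //|].
by rewrite !size_map !size_filter -!(count_map fst (fun w => (w == u) || (w == v))) senders.
Qed.

Section Splice.
Variables (V : finType) (e : rel V) (k : nat) (P : protocol V k).
Hypothesis e_sym : symmetric e.
Variables (A : {set V}) (u v : V).
Hypothesis A_cut : forall a b, e a b -> a \in A -> b \notin A -> (a == u) && (b == v).
Variables (x y : k.-tuple bool).

Fixpoint spliced (tr1 tr2 tr3 : seq (V * bitseq)) : Prop :=
  match tr1, tr2, tr3 with
  | m1 :: r1, m2 :: r2, m3 :: r3 =>
     [/\ m2.1 = m1.1, m3.1 = m1.1, m3.2 = (if m1.1 \in A then m1.2 else m2.2),
         ((m1.1 == u) || (m1.1 == v) -> m1.2 = m2.2) & spliced r1 r2 r3]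
  | [::], [::], [::] => True
  | _, _, _ => False
  end.

Lemma spliced_senders tr1 tr2 tr3 : spliced tr1 tr2 tr3 ->
  map fst tr2 = map fst tr1 /\ map fst tr3 = map fst tr1.
Proof.
elim: tr1 tr2 tr3 => [|[s1 m1] r1 IH] [|[s2 m2] r2] [|[s3 m3] r3] //=.
by move=> [/= -> -> _ _ /IH[-> ->]].
Qed.

Lemma spliced_rcons tr1 tr2 tr3 w m1 m2 m3 : spliced tr1 tr2 tr3 ->
  m3 = (if w \in A then m1 else m2) -> ((w == u) || (w == v) -> m1 = m2) ->
  spliced (rcons tr1 (w, m1)) (rcons tr2 (w, m2)) (rcons tr3 (w, m3)).
Proof.
elim: tr1 tr2 tr3 => [|[s1 m1'] r1 IH] [|[s2 m2'] r2] [|[s3 m3'] r3] //=.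
by move=> [-> -> -> uv12 /IH sp] m3E uvE; split=> //; apply: sp.
Qed.

(* Only [v] is heard across the cut from inside [A], and only [u] from outside. *)
Lemma spliced_view tr1 tr2 tr3 w : spliced tr1 tr2 tr3 ->
  view e w tr3 = if w \in A then view e w tr1 else view e w tr2.
Proof.
elim: tr1 tr2 tr3 => [|[s1 m1] r1 IH] [|[s2 m2] r2] [|[s3 m3] r3] //=.
  by case: ifP.
move=> [-> -> -> uv12 /IH ->].
case wA: (w \in A); case sA: (s1 \in A) => //; case es: (e s1 w) => //;
  congr (Some _ :: _).
- apply/esym/uv12; rewrite e_sym in es.
  by case/andP: (A_cut es wA (negbT sA)) => _ /eqP->; rewrite eqxx orbT.
- by apply: uv12; case/andP: (A_cut es sA (negbT wA)) => /eqP->; rewrite eqxx.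
Qed.

Let mixed (w : V) := if w \in A then x else y.

Lemma spliced_run s t tr1 tr2 tr3 : spliced tr1 tr2 tr3 ->
  edge_msgs u v (run e P (fun=> x) s t tr1) = edge_msgs u v (run e P (fun=> y) s t tr2) ->
  spliced (run e P (fun=> x) s t tr1) (run e P (fun=> y) s t tr2) (run e P mixed s t tr3).
Proof.
elim: s t tr1 tr2 tr3 => [|[w l] s IH] t tr1 tr2 tr3 //= sp same.
apply: IH (same); apply: spliced_rcons => //.
  by rewrite /mixed (spliced_view w sp); case: (w \in A).
move=> uv_w.
have [r1 E1] := run_extends e P (fun=> x) s t.+1
  (rcons tr1 (w, fit l (msgf P t w x (view e w tr1)))).
have [r2 E2] := run_extends e P (fun=> y) s t.+1
  (rcons tr2 (w, fit l (msgf P t w y (view e w tr2)))).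
move: same; rewrite E1 E2 => /edge_msgs_prefix.
rewrite !map_rcons (proj1 (spliced_senders sp)) => /(_ erefl).
by rewrite /edge_msgs !filter_rcons /= uv_w !map_rcons => /rcons_inj[].
Qed.

Lemma spliced_accepts :
  edge_msgs u v (transcript e P (fun=> x)) = edge_msgs u v (transcript e P (fun=> y)) ->
  forall w, accepts e P mixed w =
            if w \in A then accepts e P (fun=> x) w else accepts e P (fun=> y) w.
Proof.
move=> same w; have sp := @spliced_run (sched P) 0 [::] [::] [::] I same.
by rewrite /accepts (spliced_view w sp) /mixed; case: (w \in A).
Qed.

End Splice.

Lemma sent_bits_cut (V : finType) (e : rel V) (e_sym : symmetric e) k
    (P : protocol V k) (A : {set V}) u v :
  (forall a b, e a b -> a \in A -> b \notin A -> (a == u) && (b == v)) ->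
  u \in A -> v \notin A -> solves e P -> k <= sent_bits P u + sent_bits P v.
Proof.
move=> A_cut uA vA [accept_eq reject_neq].
have uv : u != v by apply: contraTneq uA => ->.
pose L := \sum_(b <- sched P | (b.1 == u) || (b.1 == v)) b.2.
have -> : sent_bits P u + sent_bits P v = L.
  rewrite /L (bigID (fun b => b.1 == u)) /=; congr (_ + _); apply: eq_bigl => b.
    by rewrite andbC; case: (b.1 == u).
  by case: (eqVneq b.1 u) => [->|_]; rewrite ?(negbTE uv) ?andbT.
pose msgs (z : k.-tuple bool) := edge_msgs u v (transcript e P (fun=> z)).
have msgs_shape z : shape (msgs z) = [seq b.2 | b <- sched P & (b.1 == u) || (b.1 == v)].
  rewrite -(transcript_shape e P (fun=> z)) /msgs /edge_msgs /shape filter_map -!map_comp.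
  exact: eq_map.
have size_code z : size (flatten (msgs z)) == L.
  by rewrite size_flatten msgs_shape sumnE big_map big_filter.
pose code z : L.-tuple bool := Tuple (size_code z).
have code_inj : injective code.
  move=> z1 z2 /(congr1 val) /= same_flat.
  have same : msgs z1 = msgs z2.
    by rewrite -(flattenK (msgs z1)) -(flattenK (msgs z2)) !msgs_shape same_flat.
  apply/eqP/negPn/negP => z12.
  have [|w] := reject_neq (fun w => if w \in A then z1 else z2).
    by exists u, v; rewrite uA (negbTE vA); exact/eqP.
  by rewrite (spliced_accepts e_sym A_cut same); case: (w \in A); rewrite (accept_eq _ _ w).
by have := leq_card code code_inj; rewrite !card_tuple card_bool leq_exp2l.
Qed.

Lemma connected_edge_neq (V : finType) (e : rel V) (T : eqType) (f : V -> T) :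
  graph_connected e -> (exists u v, f u <> f v) -> exists a b, e a b /\ f a <> f b.
Proof.
move=> conn [u [v]]; have /connectP[p pp ->] := conn u v.
elim: p u pp => [|b p IH] a //= /andP[eab pp] fab.
have [fab'|/eqP fab'] := eqVneq (f a) (f b); last by exists a, b.
by apply: IH pp _; rewrite -fab'.
Qed.

Section SimpleProtocol.
Variables (V : finType) (e : rel V) (S : {set V}) (k : nat).

Lemma simple_transcript lam :
  transcript e (simple_protocol S k) lam = [seq (w, val (lam w)) | w <- enum S].
Proof.
rewrite /transcript /=.
suff run_simple s t tr : run e (simple_protocol S k) lam [seq (w, k) | w <- s] t tr =
    tr ++ [seq (w, val (lam w)) | w <- s] by apply: run_simple.
elim: s t tr => [|w s IH] t tr /=; first by rewrite cats0.
rewrite IH cat_rcons /fit; have lam_size := size_tuple (lam w).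
by rewrite -{1}lam_size take_size lam_size subnn cats0.
Qed.

Lemma simple_cost : cost (simple_protocol S k) = #|S| * k.
Proof. by rewrite /cost /= cardE; elim: (enum S) => //= w s ->; rewrite mulSn. Qed.

Lemma simple_acceptsP lam w :
  reflect (forall s, s \in S -> e s w -> lam s = lam w)
          (accepts e (simple_protocol S k) lam w).
Proof.
rewrite /accepts simple_transcript /view -map_comp /= all_map.
apply: (iffP allP) => /= same s; rewrite ?mem_enum.
  by move=> sS esw; move: (same s); rewrite mem_enum esw => /(_ sS) /eqP /val_inj.
by move=> sS; case: ifP => // esw; rewrite (same s sS esw).
Qed.

Lemma simple_solves : symmetric e -> graph_connected e ->
  is_vertex_cover e S -> solves e (simple_protocol S k).
Proof.
move=> e_sym conn coverS; split=> [lam lam_const w|lam /(connected_edge_neq conn)].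
  by apply/simple_acceptsP => s _ _; apply: lam_const.
move=> [a [b [eab lab]]].
have /orP[aS|bS] := implyP (forallP (forallP coverS a) b) eab.
  by exists b; apply/negP => /simple_acceptsP /(_ a aS eab).
exists a; apply/negP => /simple_acceptsP /(_ b bS); rewrite e_sym => /(_ eab) /esym.
exact: lab.
Qed.

End SimpleProtocol.

Lemma is_opt_unique (V : finType) (e : rel V) k c1 c2 :
  is_opt e k c1 -> is_opt e k c2 -> c1 = c2.
Proof.
move=> [[P1 [solP1 <-]] min1] [[P2 [solP2 <-]] min2].
by apply/eqP; rewrite eqn_leq min1 ?min2.
Qed.

Lemma opt_kE (V : finType) (e : rel V) k c : is_opt e k c -> opt_k e k = c.
Proof. by move=> optc; apply: is_opt_unique _ (optc); apply: epsilon_spec; exists c. Qed.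

Section TreeOptimum.
Variables (V : finType) (e : rel V).
Hypotheses (e_sym : symmetric e) (e_irr : irreflexive e) (T_tree : is_tree e).

Lemma tree_cost_lower_bound k (P : protocol V k) : solves e P -> k * vc e <= cost P.
Proof.
have e_acyclic := proj2 T_tree.
move=> solP; rewrite cost_sum_sent_bits; apply: (acyclic_vc_weight e_sym e_irr e_acyclic).
move=> u v /(acyclic_edge_cut e_sym e_irr e_acyclic)[A [uA vA A_cut]].
exact: (sent_bits_cut e_sym A_cut uA vA solP).
Qed.

Lemma tree_opt_k k : opt_k e k = vc e * k.
Proof.
have [S [coverS cardS]] := min_vertex_cover_exists e.
apply: opt_kE; split=> [|P solP]; last by rewrite mulnC; apply: tree_cost_lower_bound.
exists (simple_protocol S k); split; last by rewrite simple_cost cardS.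
exact: simple_solves e_sym (proj1 T_tree) coverS.
Qed.

End TreeOptimum.

Lemma Un_cv_div_linear (u : nat -> nat) c : (forall k, u k = c * k) ->
  Un_cv (fun k => Rdiv (INR (u k)) (INR k)) (INR c).
Proof.
move=> uE eps eps_pos; exists 1%nat => n n_pos; rewrite uE mult_INR /R_dist.
have n0 : INR n <> R0 by apply: not_0_INR => n0; rewrite n0 in n_pos; inversion n_pos.
have -> : Rminus (Rdiv (Rmult (INR c) (INR n)) (INR n)) (INR c) = R0 by field.
by rewrite Rabs_R0.
Qed.

Theorem theorem3p1 (V : finType) (e : rel V)
    (e_sym : symmetric e) (e_irr : irreflexive e) (T_tree : is_tree e) :
  Un_cv (fun k => Rdiv (INR (opt_k e k)) (INR k)) (INR (vc e)) /\
  (forall S : {set V}, min_vertex_cover e S ->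
     (forall k : nat, solves e (simple_protocol S k)) /\
     Un_cv (fun k => Rdiv (INR (opt_k e k)) (INR k)) (INR #|S|)).
Proof.
have opt_cv := Un_cv_div_linear (tree_opt_k e_sym e_irr T_tree).
split=> // S [coverS ->]; split=> // k.
exact: simple_solves e_sym (proj1 T_tree) coverS.
Qed.
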